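(* Let $\|\cdot\|_\alpha$ be a norm from a dimension-invariant family of matrix norms, let $u>0$, and let $A$ be $n\times n$ with blocking $\mathcal{I}$ having $n_t$ blocks. Let $\widehat L$ be block lower triangular and $\widehat R$ block upper triangular (with respect to $\mathcal{I}$), and let $A^{(1)}=A,A^{(2)},\dots,A^{(n_t)}$ be matrices where $A^{(k)}$ has block rows and columns indexed $k,\dots,n_t$. Write $\mathcal{T}_k=k+1:n_t$. Assume that for all $1\le k\le n_t$, $$A^{(k)}_{kk}=\widehat L_{kk}\widehat R_{kk}+E^{(k)}_{11},\quad \|E^{(k)}_{11}\|_\alpha\le c^{(k)}_{11}u\|A^{(k)}_{kk}\|_\alpha,$$ and that for all $1\le k\le n_t-1$, $$A^{(k)}_{k\mathcal{T}_k}=\widehat L_{kk}\widehat R_{k\mathcal{T}_k}+E^{(k)}_{12},\quad \|E^{(k)}_{12}\|_\alpha\le c^{(k)}_{12}u\|\widehat L_{kk}\|_\alpha\|\widehat R_{k\mathcal{T}_k}\|_\alpha,$$ $$A^{(k)}_{\mathcal{T}_kk}=\widehat L_{\mathcal{T}_kk}\widehat R_{kk}+E^{(k)}_{21},\quad \|E^{(k)}_{21}\|_\alpha\le c^{(k)}_{21}u\|\widehat L_{\mathcal{T}_kk}\|_\alpha\|\widehat R_{kk}\|_\alpha,$$ $$A^{(k+1)}=A^{(k)}_{\mathcal{T}_k\mathcal{T}_k}-\widehat L_{\mathcal{T}_kk}\widehat R_{k\mathcal{T}_k}+E^{(k)}_{22},\quad \|E^{(k)}_{22}\|_\alpha\le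 c^{(k)}_{22A}u\|A^{(k)}_{\mathcal{T}_k\mathcal{T}_k}\|_\alpha+c^{(k)}_{22LU}u\|\widehat L_{\mathcal{T}_kk}\|_\alpha\|\widehat R_{k\mathcal{T}_k}\|_\alpha,$$ with nonnegative constants $c^{(k)}_{\ast}$. Let $\rho=\max_{1\le k\le n_t}\|A^{(k)}\|_\alpha/\|A\|_\alpha$. Then $$\|A-\widehat L\widehat R\|_\alpha\le C_Au\rho\|A\|_\alpha+C_{LU}u\|\widehat L\|_\alpha\|\widehat R\|_\alpha,$$ where $C_A=\sum_{k=1}^{n_t}c^{(k)}_{11}+\sum_{k=1}^{n_t-1}c^{(k)}_{22A}$ and $C_{LU}=\sum_{k=1}^{n_t-1}\big(c^{(k)}_{21}+c^{(k)}_{12}+c^{(k)}_{22LU}\big)$.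
   Context: A dimension-invariant family of matrix norms is a choice of norm for matrices of every size such that for every matrix $B$ and every partition of its rows and columns into contiguous blocks $B_{i,j}$, $\max_{i,j}\|B_{i,j}\|\le\|B\|\le\sum_{i,j}\|B_{i,j}\|$. Blocking: a strictly increasing list $\mathcal{I}=[1=\mathcal{I}_1<\dots<\mathcal{I}_{n_t+1}=n+1]$; block $(i,j)$ of a matrix is the submatrix with rows $\mathcal{I}_i:\mathcal{I}_{i+1}-1$ and columns $\mathcal{I}_j:\mathcal{I}_{j+1}-1$, and $B_{i:j,k:l}$ denotes a range of blocks. The hypotheses model a floating-point block LU factorization (unit roundoff $u$) in which the Schur complement updates are performed in order. *)

From HB Require Import structures.
From mathcomp Require Import all_boot all_order all_algebra.
Set Implicit Arguments. Unset Strict Implicit. Unset Printing Implicit Defensive.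
Import Order.TTheory GRing.Theory Num.Theory.
Local Open Scope ring_scope.

Section Defs.
Variable R : realFieldType.

(* Total (0-indexed) entry accessor: out-of-range entries read as 0. *)
Definition mget {m n : nat} (M : 'M[R]_(m, n)) (i j : nat) : R :=
  match (insub i : option 'I_m), (insub j : option 'I_n) with
  | Some i', Some j' => M i' j'
  | _, _ => 0
  end.

Definition subm {m n : nat} (M : 'M[R]_(m, n)) (r0 h c0 w : nat) : 'M[R]_(h, w) :=
  \matrix_(i < h, j < w) mget M (r0 + i) (c0 + j).

(* A list of cut points 0 = p_0 < p_1 < ... < p_s = m : a partition of 0..m-1
   into (nonempty) contiguous blocks [p_i, p_{i+1}). *)
Definition cuts (p : seq nat) (m : nat) : bool :=
  [&& sorted ltn p, head 1%N p == 0%N & last 0%N p == m].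

Definition blockof {m n : nat} (B : 'M[R]_(m, n)) (pr pc : seq nat) (i j : nat) :=
  subm B (nth 0%N pr i) (nth 0%N pr i.+1 - nth 0%N pr i)
         (nth 0%N pc j) (nth 0%N pc j.+1 - nth 0%N pc j).

Definition mxnorm_family (nrm : forall m n : nat, 'M[R]_(m, n) -> R) : Prop :=
  forall m n : nat,
    [/\ forall A : 'M[R]_(m, n), nrm m n A = 0 -> A = 0,
        forall (a : R) (A : 'M[R]_(m, n)), nrm m n (a *: A) = `|a| * nrm m n A
      & forall A B : 'M[R]_(m, n), nrm m n (A + B) <= nrm m n A + nrm m n B].

Definition dim_invariant (nrm : forall m n : nat, 'M[R]_(m, n) -> R) : Prop :=
  forall (m n : nat) (B : 'M[R]_(m, n)) (pr pc : seq nat),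
    cuts pr m -> cuts pc n ->
    (forall i j : nat, (i < (size pr).-1)%N -> (j < (size pc).-1)%N ->
       nrm _ _ (blockof B pr pc i j) <= nrm _ _ B)
    /\ nrm _ _ B <= \sum_(i < (size pr).-1) \sum_(j < (size pc).-1)
                     nrm _ _ (blockof B pr pc i j).

Definition dim_invariant_norm_family (nrm : forall m n : nat, 'M[R]_(m, n) -> R) :=
  mxnorm_family nrm /\ dim_invariant nrm.

(* Blocking given by cut function I (0-indexed): block k is the index range
   [I k, I (k+1)).  For a matrix M whose first row/column is the global index o,
   blk I o M a b c d is the range of blocks  a..b-1 (rows) x c..d-1 (columns). *)
Definition blk (I : nat -> nat) (o : nat) {m n : nat} (M : 'M[R]_(m, n))
    (a b c d : nat) : 'M[R]_(I b - I a, I d - I c) :=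
  subm M (I a - o) (I b - I a) (I c - o) (I d - I c).

End Defs.

From HB Require Import structures.
From mathcomp Require Import all_boot all_order all_algebra.
From mathcomp Require Import zify lra.
Set Implicit Arguments. Unset Strict Implicit. Unset Printing Implicit Defensive.
Import Order.TTheory GRing.Theory Num.Theory.
Local Open Scope ring_scope.

(* Let N_k be the norm of the residual A^(k) - L_(k:,k:) R_(k:,k:) of the k-th Schur
   complement.  Split this residual into the 2x2 block matrix given by block k and the
   trailing blocks T_k.  Because L is block lower and R block upper triangular, the
   three border blocks are exactly E11, E12 and E21 of step k, and the trailing block
   is (A^(k+1) - L_(T,T) R_(T,T)) - E22.  Dimension invariance bounds N_k by the sum of
   the norms of the four blocks, so N_k <= |E11| + |E12| + |E21| + |E22| + N_(k+1);
   unrolling this recurrence from N_1 = |A - L R| and bounding |A^(k)| by rho |A| and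
   every block of L, R by the whole matrix gives the result. *)

Section Submatrices.
Variable R : realFieldType.
Implicit Types m n p : nat.

Lemma mget_ord m n (M : 'M[R]_(m, n)) (i : 'I_m) (j : 'I_n) : mget M i j = M i j.
Proof. by rewrite /mget !valK. Qed.

Lemma mget_out m n (M : 'M[R]_(m, n)) i j :
  ~~ ((i < m)%N && (j < n)%N) -> mget M i j = 0.
Proof.
rewrite /mget negb_and => /orP[lei | lej]; first by rewrite insubN.
by case: insub => // ?; rewrite insubN.
Qed.

Lemma mget_subm m n (M : 'M[R]_(m, n)) r0 h c0 w i j :
  (i < h)%N -> (j < w)%N -> mget (subm M r0 h c0 w) i j = mget M (r0 + i) (c0 + j).
Proof.
move=> lt_ih lt_jw.
by rewrite -[i]/(nat_of_ord (Ordinal lt_ih)) -[j]/(nat_of_ord (Ordinal lt_jw)) mget_ord mxE.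
Qed.

Lemma mgetB m n (A B : 'M[R]_(m, n)) i j : mget (A - B) i j = mget A i j - mget B i j.
Proof.
have [/andP[lt_im lt_jn] | out] := boolP ((i < m)%N && (j < n)%N); last by rewrite !mget_out ?subr0.
by rewrite -[i]/(nat_of_ord (Ordinal lt_im)) -[j]/(nat_of_ord (Ordinal lt_jn)) !mget_ord !mxE.
Qed.

Lemma mget0 m n i j : mget (0 : 'M[R]_(m, n)) i j = 0.
Proof. by rewrite -(subrr (0 : 'M[R]_(m, n))) mgetB subrr. Qed.

Lemma mget_mulmx m p n (A : 'M[R]_(m, p)) (B : 'M[R]_(p, n)) i j :
  (i < m)%N -> (j < n)%N -> mget (A *m B) i j = \sum_(l < p) mget A i l * mget B l j.
Proof.
move=> lt_im lt_jn.
rewrite -[i]/(nat_of_ord (Ordinal lt_im)) -[j]/(nat_of_ord (Ordinal lt_jn)) mget_ord mxE.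
by apply: eq_bigr => l _; rewrite !mget_ord.
Qed.

Lemma submB m n (A B : 'M[R]_(m, n)) r0 h c0 w :
  subm (A - B) r0 h c0 w = subm A r0 h c0 w - subm B r0 h c0 w.
Proof. by apply/matrixP => i j; rewrite !mxE mgetB. Qed.

Lemma blkB (I : nat -> nat) o m n (A B : 'M[R]_(m, n)) a b c d :
  blk I o (A - B) a b c d = blk I o A a b c d - blk I o B a b c d.
Proof. exact: submB. Qed.

Lemma subm_id m n (M : 'M[R]_(m, n)) : subm M 0 m 0 n = M.
Proof. by apply/matrixP => i j; rewrite mxE !add0n mget_ord. Qed.

Lemma blk_id (I : nat -> nat) k q q' (M : 'M[R]_(I q - I k, I q' - I k)) :
  blk I (I k) M k q k q' = M.
Proof. by rewrite /blk subnn subm_id. Qed.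

Lemma subm_eq0 m n (M : 'M[R]_(m, n)) r0 h c0 w :
  (forall i j, (i < h)%N -> (j < w)%N -> mget M (r0 + i) (c0 + j) = 0) ->
  subm M r0 h c0 w = 0.
Proof. by move=> M0; apply/matrixP => i j; rewrite !mxE M0. Qed.

Lemma subm_mulmx m1 n1 m2 n2 (A : 'M[R]_(m1, n1)) (B : 'M[R]_(m2, n2))
    r0 h c0 p r1 c1 w r h' c w' :
  (r + h' <= h)%N -> (c + w' <= w)%N ->
  subm (subm A r0 h c0 p *m subm B r1 p c1 w) r h' c w'
  = subm A (r0 + r) h' c0 p *m subm B r1 p (c1 + c) w'.
Proof.
move=> le_h le_w; apply/matrixP => i j; have := ltn_ord i; have := ltn_ord j.
move=> lt_j lt_i; rewrite !mxE mget_mulmx; try lia.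
apply: eq_bigr => l _; rewrite !mxE !mget_subm ?addnA //; have := ltn_ord l; lia.
Qed.

Lemma subm_mulmx_split m1 n1 m2 n2 (A : 'M[R]_(m1, n1)) (B : 'M[R]_(m2, n2))
    r0 h c0 r1 c1 w p q :
  subm A r0 h c0 (p + q) *m subm B r1 (p + q) c1 w
  = subm A r0 h c0 p *m subm B r1 p c1 w
    + subm A r0 h (c0 + p) q *m subm B (r1 + p) q c1 w.
Proof.
apply/matrixP => i j; rewrite !mxE big_split_ord /=.
by congr (_ + _); apply: eq_bigr => l _; rewrite !mxE ?addnA.
Qed.

End Submatrices.

Section DimensionInvariantNorms.
Variable R : realFieldType.
Variable nrm : forall m n : nat, 'M[R]_(m, n) -> R.
Hypothesis nrm_family : dim_invariant_norm_family nrm.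

Lemma nrm0 m n : nrm (0 : 'M[R]_(m, n)) = 0.
Proof.
have [/(_ m n) [_ nrmZ _] _] := nrm_family.
by rewrite -(scale0r (0 : 'M[R]_(m, n))) nrmZ normr0 mul0r.
Qed.

Lemma nrmN m n (A : 'M[R]_(m, n)) : nrm (- A) = nrm A.
Proof.
have [/(_ m n) [_ nrmZ _] _] := nrm_family.
by rewrite -scaleN1r nrmZ normrN normr1 mul1r.
Qed.

Lemma nrmD_le m n (A B : 'M[R]_(m, n)) : nrm (A + B) <= nrm A + nrm B.
Proof. by have [/(_ m n) [_ _ ->] _] := nrm_family. Qed.

Lemma nrmB_le m n (A B : 'M[R]_(m, n)) : nrm (A - B) <= nrm A + nrm B.
Proof. by rewrite -(nrmN B) nrmD_le. Qed.

Lemma nrm_ge0 m n (A : 'M[R]_(m, n)) : 0 <= nrm A.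
Proof. by have := nrmB_le A A; rewrite subrr nrm0 => ?; lra. Qed.

Lemma nrm_gt0 m n (A : 'M[R]_(m, n)) : A != 0 -> 0 < nrm A.
Proof.
have [/(_ m n) [nrm_eq0 _ _] _] := nrm_family.
by move=> nzA; rewrite lt_def nrm_ge0 andbT; apply: contra_neq nzA => /nrm_eq0.
Qed.

Lemma nrm_mget_eq m1 n1 m2 n2 (A : 'M[R]_(m1, n1)) (B : 'M[R]_(m2, n2)) :
  m1 = m2 -> n1 = n2 ->
  (forall i j, (i < m1)%N -> (j < n1)%N -> mget A i j = mget B i j) ->
  nrm A = nrm B.
Proof.
move=> e_m e_n; subst m2 n2 => eqAB; congr (nrm _).
by apply/matrixP => i j; rewrite -!mget_ord eqAB.
Qed.

Lemma nrm_blk_dim (I : nat -> nat) o m n (M : 'M[R]_(m, n)) a b b' c d d' :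
  b = b' -> d = d' -> nrm (blk I o M a b c d) = nrm (blk I o M a b' c d').
Proof. by move=> -> ->. Qed.

Lemma cuts_around m r0 h : (0 < h)%N -> (r0 + h <= m)%N ->
  exists p i, [/\ cuts p m, (i < (size p).-1)%N, nth 0%N p i = r0
                 & nth 0%N p i.+1 = (r0 + h)%N].
Proof.
move=> h_gt0 le_m.
case: (posnP r0) => [r00|r0_gt0]; case: (ltnP (r0 + h) m) => lt_m.
- by exists [:: 0%N; h; m], 0%N; split; rewrite /cuts /=; lia.
- by exists [:: 0%N; m], 0%N; split; rewrite /cuts /=; lia.
- by exists [:: 0%N; r0; (r0 + h)%N; m], 1%N; split; rewrite /cuts /=; lia.
- by exists [:: 0%N; r0; m], 1%N; split; rewrite /cuts /=; lia.
Qed.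

Lemma nrm_subm_le m n (M : 'M[R]_(m, n)) r0 h c0 w :
  (r0 + h <= m)%N -> (c0 + w <= n)%N -> nrm (subm M r0 h c0 w) <= nrm M.
Proof.
move=> le_m le_n.
have [h0 | h_gt0] := posnP h.
  by subst h; rewrite (_ : subm _ _ _ _ _ = 0) ?nrm0 ?nrm_ge0 //; apply/matrixP => -[].
have [w0 | w_gt0] := posnP w.
  by subst w; rewrite (_ : subm _ _ _ _ _ = 0) ?nrm0 ?nrm_ge0 //; apply/matrixP => ? -[].
have [pr [i [cut_r lt_i pr_i pr_i1]]] := cuts_around h_gt0 le_m.
have [pc [j [cut_c lt_j pc_j pc_j1]]] := cuts_around w_gt0 le_n.
have [_ /(_ m n M pr pc cut_r cut_c) [blk_le _]] := nrm_family.
move: (blk_le i j lt_i lt_j); rewrite /blockof pr_i pr_i1 pc_j pc_j1.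
by rewrite !addKn.
Qed.

Lemma nrm_block2_le m n (M : 'M[R]_(m, n)) a a' b b' :
  (0 < a)%N -> (0 < a')%N -> (0 < b)%N -> (0 < b')%N -> (a + a' = m)%N -> (b + b' = n)%N ->
  nrm M <= nrm (subm M 0 a 0 b) + nrm (subm M 0 a b b')
           + nrm (subm M a a' 0 b) + nrm (subm M a a' b b').
Proof.
move=> a_gt0 a'_gt0 b_gt0 b'_gt0 e_m e_n; subst m n.
have cut_r : cuts [:: 0%N; a; a + a'] (a + a') by rewrite /cuts /=; lia.
have cut_c : cuts [:: 0%N; b; b + b'] (b + b') by rewrite /cuts /=; lia.
have [_ /(_ _ _ M _ _ cut_r cut_c) [_]] := nrm_family.
rewrite !big_ord_recl !big_ord0 /= !addr0 /blockof /= addrA.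
by rewrite !subn0 !addKn.
Qed.

End DimensionInvariantNorms.

Section IncreasingCuts.
Variables (nt : nat) (I : nat -> nat).
Hypothesis I_incr : forall k, (k < nt)%N -> (I k < I k.+1)%N.

Lemma cut_ltn x y : (x < y)%N -> (y <= nt)%N -> (I x < I y)%N.
Proof.
elim: y => // y IHy; rewrite ltnS leq_eqVlt => /orP[/eqP-> | lt_xy] le_y.
  exact: I_incr.
exact: ltn_trans (IHy lt_xy (ltnW le_y)) (I_incr le_y).
Qed.

Lemma cut_leq x y : (x <= y)%N -> (y <= nt)%N -> (I x <= I y)%N.
Proof. by rewrite leq_eqVlt => /orP[/eqP-> // | lt_xy] /(cut_ltn lt_xy)/ltnW. Qed.

Lemma blk_mulmx (R : realFieldType) m1 n1 m2 n2 (A : 'M[R]_(m1, n1)) (B : 'M[R]_(m2, n2))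
    k q q' r s a b c d :
  (k <= a <= b)%N -> (b <= q <= nt)%N -> (k <= c <= d)%N -> (d <= q' <= nt)%N ->
  blk I (I k) (blk I 0 A k q r s *m blk I 0 B r s k q') a b c d
  = blk I 0 A a b r s *m blk I 0 B r s c d.
Proof.
move=> /andP[le_ka le_ab] /andP[le_bq le_q] /andP[le_kc le_cd] /andP[le_dq le_q'].
have := cut_leq le_ka (leq_trans le_ab (leq_trans le_bq le_q)).
have := cut_leq le_ab (leq_trans le_bq le_q); have := cut_leq le_bq le_q.
have := cut_leq le_kc (leq_trans le_cd (leq_trans le_dq le_q')).
have := cut_leq le_cd (leq_trans le_dq le_q'); have := cut_leq le_dq le_q'.
move=> *; rewrite /blk subm_mulmx; try lia.
by rewrite !subn0 !subnKC.
Qed.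

Lemma blk_mulmx_split (R : realFieldType) m1 n1 m2 n2
    (A : 'M[R]_(m1, n1)) (B : 'M[R]_(m2, n2)) a b c d j k l :
  (j <= k <= l)%N -> (l <= nt)%N ->
  blk I 0 A a b j l *m blk I 0 B j l c d
  = blk I 0 A a b j k *m blk I 0 B j k c d + blk I 0 A a b k l *m blk I 0 B k l c d.
Proof.
move=> /andP[le_jk le_kl] le_l.
have := cut_leq le_jk (leq_trans le_kl le_l); have := cut_leq le_kl le_l => *.
rewrite /blk (_ : (I l - I j = (I k - I j) + (I l - I k))%N); last by lia.
by rewrite subm_mulmx_split !subn0 subnKC.
Qed.

End IncreasingCuts.

Section CutBlocks.
Variables (nt : nat) (I : nat -> nat).
Hypothesis I0 : I 0%N = 0%N.

Lemma cut_block x y z : (x <= y <= nt)%N -> (z < I y - I x)%N ->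
  exists2 b, (x <= b < y)%N & (I b <= I x + z < I b.+1)%N.
Proof.
elim: y => [|y IHy] /andP[le_xy le_y] lt_z; first by rewrite I0 sub0n in lt_z.
have [eq_xy | lt_xy] := eqVneq x y.+1; first by rewrite eq_xy subnn in lt_z.
have {lt_xy} le_xy' : (x <= y)%N by lia.
have [lt_Iy | le_Iy] := ltnP (I x + z) (I y); last by exists y; rewrite ?le_xy' ?le_Iy //=; lia.
have range_y : (x <= y <= nt)%N by rewrite le_xy' ltnW.
have lt_zy : (z < I y - I x)%N by lia.
have [b /andP[le_xb lt_by] Ib] := IHy range_y lt_zy.
by exists b; rewrite ?le_xb ?Ib // ltnS ltnW.
Qed.

Lemma mget_blk_eq0 (R : realFieldType) m n (M : 'M[R]_(m, n)) i j r c :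
  (I i <= r < I i.+1)%N -> (I j <= c < I j.+1)%N ->
  blk I 0 M i i.+1 j j.+1 = 0 -> mget M r c = 0.
Proof.
move=> /andP[le_ir lt_ri] /andP[le_jc lt_cj] /(congr1 (fun B => mget B (r - I i) (c - I j))).
by rewrite mget0 mget_subm ?subn0 ?subnKC //; lia.
Qed.

Lemma blk_eq0 (R : realFieldType) m n (M : 'M[R]_(m, n)) a b c d :
  (a <= b <= nt)%N -> (c <= d <= nt)%N ->
  (forall i j, (a <= i < b)%N -> (c <= j < d)%N -> blk I 0 M i i.+1 j j.+1 = 0) ->
  blk I 0 M a b c d = 0.
Proof.
move=> le_b le_d M0; apply: subm_eq0 => i j lt_i lt_j; rewrite !subn0.
have [bi range_bi Ibi] := cut_block le_b lt_i.
have [bj range_bj Ibj] := cut_block le_d lt_j.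
exact: mget_blk_eq0 Ibi Ibj (M0 _ _ range_bi range_bj).
Qed.

End CutBlocks.

Lemma telescope_le (R : realDomainType) (N f g : nat -> R) nt : (0 < nt)%N ->
  (forall k, (k.+1 < nt)%N -> N k <= f k + g k + N k.+1) -> N nt.-1 <= f nt.-1 ->
  N 0%N <= \sum_(k < nt) f k + \sum_(k < nt.-1) g k.
Proof.
move=> nt_gt0 N_step N_last.
suff N_le d k : (k + d).+1 = nt ->
    N k <= \sum_(k <= l < nt) f l + \sum_(k <= l < nt.-1) g l.
  by have := N_le nt.-1 0%N; rewrite add0n prednK // !big_mkord; apply.
elim: d k => [|d IHd] k e_k.
  by move: N_last; rewrite -e_k addn0 big_nat1 big_geq // addr0.
have lt_k : (k.+1 < nt)%N by lia.
rewrite (big_ltn (F := f)) ?(ltnW lt_k) // (big_ltn (F := g)); last by lia.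
have e_k1 : (k.+1 + d).+1 = nt by lia.
have := IHd k.+1 e_k1; have := N_step k lt_k; lra.
Qed.

Section BlockLU.
Variable R : realFieldType.
Variable nrm : forall m n : nat, 'M[R]_(m, n) -> R.
Hypothesis nrm_family : dim_invariant_norm_family nrm.
Variables (n nt : nat) (I : nat -> nat).
Hypothesis I0 : I 0%N = 0%N.
Hypothesis I_nt : I nt = n.
Hypothesis I_incr : forall k, (k < nt)%N -> (I k < I k.+1)%N.

Lemma nrm_blk_le m1 m2 (M : 'M[R]_(m1, m2)) o a b c d :
  (o <= I a)%N -> (a <= b <= nt)%N -> (I nt - o <= m1)%N ->
  (o <= I c)%N -> (c <= d <= nt)%N -> (I nt - o <= m2)%N ->
  nrm (blk I o M a b c d) <= nrm M.
Proof.
move=> le_oa /andP[le_ab le_b] le_m1 le_oc /andP[le_cd le_d] le_m2.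
have := cut_leq I_incr le_ab le_b; have := cut_leq I_incr le_b (leqnn nt).
have := cut_leq I_incr le_cd le_d; have := cut_leq I_incr le_d (leqnn nt).
by move=> *; apply: (nrm_subm_le nrm_family); lia.
Qed.

Lemma nrm_blk2_le k (M : 'M[R]_(I nt - I k)) : (k.+1 < nt)%N ->
  nrm M <= nrm (blk I (I k) M k k.+1 k k.+1) + nrm (blk I (I k) M k k.+1 k.+1 nt)
           + nrm (blk I (I k) M k.+1 nt k k.+1) + nrm (blk I (I k) M k.+1 nt k.+1 nt).
Proof.
move=> lt_k; have := I_incr (ltnW lt_k); have := cut_ltn I_incr lt_k (leqnn nt).
by move=> *; rewrite /blk subnn; apply: (nrm_block2_le nrm_family); lia.
Qed.

Variables (L U : 'M[R]_n).
Hypothesis L_lower : forall i j, (i < j)%N -> (j < nt)%N -> blk I 0 L i i.+1 j j.+1 = 0.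
Hypothesis U_upper : forall i j, (j < i)%N -> (i < nt)%N -> blk I 0 U i i.+1 j j.+1 = 0.
Variable Ak : forall k : nat, 'M[R]_(I nt - I k).

(* The N_k of the proof idea: blk I 0 L k nt k nt is L_(k:,k:). *)
Definition lu_residual k := nrm (Ak k - blk I 0 L k nt k nt *m blk I 0 U k nt k nt).

Lemma blk_lower_eq0 k : (k < nt)%N -> blk I 0 L k k.+1 k.+1 nt = 0.
Proof.
move=> lt_k; apply: (@blk_eq0 nt _ I0) => [||i j /andP[le_ki lt_i] /andP[lt_kj lt_j]]; try lia.
by apply: L_lower; lia.
Qed.

Lemma blk_upper_eq0 k : (k < nt)%N -> blk I 0 U k.+1 nt k k.+1 = 0.
Proof.
move=> lt_k; apply: (@blk_eq0 nt _ I0) => [||i j /andP[lt_ki lt_i] /andP[le_kj lt_j]]; try lia.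
by apply: U_upper; lia.
Qed.

Lemma blk_trail_mulmx k a b c d : (k < nt)%N ->
  (k <= a <= b)%N -> (b <= nt)%N -> (k <= c <= d)%N -> (d <= nt)%N ->
  blk I (I k) (blk I 0 L k nt k nt *m blk I 0 U k nt k nt) a b c d
  = blk I 0 L a b k k.+1 *m blk I 0 U k k.+1 c d
    + blk I 0 L a b k.+1 nt *m blk I 0 U k.+1 nt c d.
Proof.
move=> lt_k range_ab le_b range_cd le_d.
rewrite (blk_mulmx I_incr) ?leqnn ?le_b ?le_d //.
by rewrite (blk_mulmx_split I_incr L U a b c d (_ : (k <= k.+1 <= nt)%N)) ?leqnSn.
Qed.

Lemma lu_residual_step k : (k.+1 < nt)%N ->
  lu_residual k <=
    nrm (blk I (I k) (Ak k) k k.+1 k k.+1 - blk I 0 L k k.+1 k k.+1 *m blk I 0 U k k.+1 k k.+1)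
  + nrm (blk I (I k) (Ak k) k k.+1 k.+1 nt - blk I 0 L k k.+1 k k.+1 *m blk I 0 U k k.+1 k.+1 nt)
  + nrm (blk I (I k) (Ak k) k.+1 nt k k.+1 - blk I 0 L k.+1 nt k k.+1 *m blk I 0 U k k.+1 k k.+1)
  + (lu_residual k.+1
     + nrm (Ak k.+1 - (blk I (I k) (Ak k) k.+1 nt k.+1 nt
                       - blk I 0 L k.+1 nt k k.+1 *m blk I 0 U k k.+1 k.+1 nt))).
Proof.
move=> lt_k; have lt_k' := ltnW lt_k.
apply: le_trans (nrm_blk2_le _ lt_k) _.
rewrite !blkB !blk_trail_mulmx ?leqnn ?leqnSn //.
rewrite blk_lower_eq0 // blk_upper_eq0 // !mul0mx !mulmx0 !addr0 lerD2l.
set T := blk I (I k) (Ak k) k.+1 nt k.+1 nt; set P := blk I 0 L k.+1 nt k k.+1 *m _.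
set Q := blk I 0 L k.+1 nt k.+1 nt *m _.
have -> : T - (P + Q) = (Ak k.+1 - Q) - (Ak k.+1 - (T - P)).
  by rewrite opprB [in RHS]addrC addrA subrK opprD addrA.
exact: (nrmB_le nrm_family).
Qed.

Lemma lu_residual_last k : k.+1 = nt ->
  lu_residual k
  = nrm (blk I (I k) (Ak k) k k.+1 k k.+1 - blk I 0 L k k.+1 k k.+1 *m blk I 0 U k k.+1 k k.+1).
Proof.
move=> e_k; have lt_k : (k < nt)%N by rewrite -e_k.
rewrite /lu_residual -[Ak k - _]blk_id (nrm_blk_dim nrm I _ _ k k (esym e_k) (esym e_k)).
rewrite blkB blk_trail_mulmx ?leqnn ?leqnSn //.
by rewrite blk_lower_eq0 // mul0mx addr0.
Qed.

Lemma lu_residual0 (A : 'M[R]_n) : (forall i j, mget (Ak 0) i j = mget A i j) ->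
  nrm (A - L *m U) = lu_residual 0.
Proof.
move=> Ak0; apply: nrm_mget_eq; rewrite ?I0 ?subn0 ?I_nt // => i j lt_i lt_j.
rewrite !mgetB Ak0 !mget_mulmx ?I0 ?subn0 ?I_nt //; congr (_ - _).
have lt_i' : (i < I nt - I 0)%N by rewrite I0 subn0 I_nt.
have lt_j' : (j < I nt - I 0)%N by rewrite I0 subn0 I_nt.
have off x : (I 0 - 0 + x = x)%N by rewrite I0.
under [RHS]eq_bigr => l _ do rewrite !mget_subm // !off.
by rewrite I0 subn0 I_nt.
Qed.

Lemma nrm_blk_global_le (M : 'M[R]_n) a b c d :
  (a <= b <= nt)%N -> (c <= d <= nt)%N -> nrm (blk I 0 M a b c d) <= nrm M.
Proof. by move=> ? ?; apply: nrm_blk_le; rewrite ?subn0 ?I_nt. Qed.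

Lemma nrm_blk_trail_le k (M : 'M[R]_(I nt - I k)) a b c d :
  (k <= a)%N -> (a <= b <= nt)%N -> (k <= c)%N -> (c <= d <= nt)%N ->
  nrm (blk I (I k) M a b c d) <= nrm M.
Proof.
move=> le_ka range_ab le_kc range_cd; apply: nrm_blk_le => //; apply: (cut_leq I_incr); lia.
Qed.

Variables (u a : R) (c11 c12 c21 c22A c22LU : nat -> R).
Hypothesis u_gt0 : 0 < u.
Hypothesis c_ge0 : forall k,
  [/\ 0 <= c11 k, 0 <= c12 k, 0 <= c21 k, 0 <= c22A k & 0 <= c22LU k].
Hypothesis Ak_le : forall k, (k < nt)%N -> nrm (Ak k) <= a.
Hypothesis H11 : forall k, (k < nt)%N ->
  nrm (blk I (I k) (Ak k) k k.+1 k k.+1 - blk I 0 L k k.+1 k k.+1 *m blk I 0 U k k.+1 k k.+1)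
  <= c11 k * u * nrm (blk I (I k) (Ak k) k k.+1 k k.+1).
Hypothesis H12 : forall k, (k.+1 < nt)%N ->
  nrm (blk I (I k) (Ak k) k k.+1 k.+1 nt - blk I 0 L k k.+1 k k.+1 *m blk I 0 U k k.+1 k.+1 nt)
  <= c12 k * u * nrm (blk I 0 L k k.+1 k k.+1) * nrm (blk I 0 U k k.+1 k.+1 nt).
Hypothesis H21 : forall k, (k.+1 < nt)%N ->
  nrm (blk I (I k) (Ak k) k.+1 nt k k.+1 - blk I 0 L k.+1 nt k k.+1 *m blk I 0 U k k.+1 k k.+1)
  <= c21 k * u * nrm (blk I 0 L k.+1 nt k k.+1) * nrm (blk I 0 U k k.+1 k k.+1).
Hypothesis H22 : forall k, (k.+1 < nt)%N ->
  nrm (Ak k.+1 - (blk I (I k) (Ak k) k.+1 nt k.+1 nt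
                  - blk I 0 L k.+1 nt k k.+1 *m blk I 0 U k k.+1 k.+1 nt))
  <= c22A k * u * nrm (blk I (I k) (Ak k) k.+1 nt k.+1 nt)
     + c22LU k * u * nrm (blk I 0 L k.+1 nt k k.+1) * nrm (blk I 0 U k k.+1 k.+1 nt).

Lemma ler_cuM c x y : 0 <= c -> x <= y -> c * u * x <= c * u * y.
Proof. by move=> c_ge0' le_xy; rewrite ler_wpM2l // mulr_ge0 // ltW. Qed.

Lemma ler_cuM2 c x x' y y' : 0 <= c -> 0 <= x -> 0 <= x' -> x <= y -> x' <= y' ->
  c * u * x * x' <= c * u * y * y'.
Proof.
move=> c_ge0' x_ge0 x'_ge0 le_xy le_xy'.
by rewrite ler_pM // ?ler_cuM // mulr_ge0 // mulr_ge0 // ltW.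
Qed.

Lemma lu_residual_step_le k : (k.+1 < nt)%N ->
  lu_residual k <= c11 k * u * a
    + (c22A k * u * a + (c21 k + c12 k + c22LU k) * u * nrm L * nrm U) + lu_residual k.+1.
Proof.
move=> lt_k; have lt_k' := ltnW lt_k.
have [c11_ge0 c12_ge0 c21_ge0 c22A_ge0 c22LU_ge0] := c_ge0 k.
have ge0 := nrm_ge0 nrm_family.
have rng1 : (k <= k.+1 <= nt)%N by rewrite leqnSn.
have rngT : (k.+1 <= nt <= nt)%N by rewrite lt_k' leqnn.
have Akk_le := le_trans (nrm_blk_trail_le (Ak k) (leqnn k) rng1 (leqnn k) rng1) (Ak_le lt_k').
have AkT_le := le_trans (nrm_blk_trail_le (Ak k) (leqnSn k) rngT (leqnSn k) rngT) (Ak_le lt_k').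
have Lkk_le := nrm_blk_global_le L rng1 rng1.
have LTk_le := nrm_blk_global_le L rngT rng1.
have Ukk_le := nrm_blk_global_le U rng1 rng1.
have UkT_le := nrm_blk_global_le U rng1 rngT.
apply: le_trans (lu_residual_step lt_k) _.
have := le_trans (H11 lt_k') (ler_cuM c11_ge0 Akk_le).
have := le_trans (H12 lt_k) (ler_cuM2 c12_ge0 (ge0 _ _ _) (ge0 _ _ _) Lkk_le UkT_le).
have := le_trans (H21 lt_k) (ler_cuM2 c21_ge0 (ge0 _ _ _) (ge0 _ _ _) LTk_le Ukk_le).
have := le_trans (H22 lt_k) (lerD (ler_cuM c22A_ge0 AkT_le)
                                 (ler_cuM2 c22LU_ge0 (ge0 _ _ _) (ge0 _ _ _) LTk_le UkT_le)).
lra.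
Qed.

Lemma lu_residual_last_le : (0 < nt)%N -> lu_residual nt.-1 <= c11 nt.-1 * u * a.
Proof.
move=> nt_gt0; have lt_nt : (nt.-1 < nt)%N by rewrite ltn_predL.
have rng : (nt.-1 <= nt.-1.+1 <= nt)%N by rewrite leqnSn.
have [c11_ge0 _ _ _ _] := c_ge0 nt.-1.
rewrite lu_residual_last; last by rewrite prednK.
apply: le_trans (H11 lt_nt) (ler_cuM c11_ge0 _).
exact: le_trans (nrm_blk_trail_le _ (leqnn _) rng (leqnn _) rng) (Ak_le lt_nt).
Qed.

Lemma lu_residual0_le : (0 < nt)%N ->
  lu_residual 0 <= (\sum_(k < nt) c11 k + \sum_(k < nt.-1) c22A k) * u * a
                   + (\sum_(k < nt.-1) (c21 k + c12 k + c22LU k)) * u * nrm L * nrm U.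
Proof.
move=> nt_gt0.
apply: le_trans (telescope_le nt_gt0 lu_residual_step_le (lu_residual_last_le nt_gt0)) _.
rewrite big_split /= -!mulr_suml; lra.
Qed.

End BlockLU.

Theorem theorem2p3 (R : realFieldType)
  (nrm : forall m n : nat, 'M[R]_(m, n) -> R)
  (Hnrm : dim_invariant_norm_family nrm)
  (u : R) (Hu : 0 < u)
  (n nt : nat) (I : nat -> nat)
  (Hnt : (0 < nt)%N)
  (HI0 : I 0%N = 0%N) (HInt : I nt = n)
  (HIinc : forall k, (k < nt)%N -> (I k < I k.+1)%N)
  (A L Rh : 'M[R]_n)
  (HA0 : A != 0)
  (HL : forall i j, (i < j)%N -> (j < nt)%N -> blk I 0 L i i.+1 j j.+1 = 0)
  (HR : forall i j, (j < i)%N -> (i < nt)%N -> blk I 0 Rh i i.+1 j j.+1 = 0)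
  (Ak : forall k : nat, 'M[R]_(I nt - I k))
  (HA1 : forall i j : nat, mget (Ak 0%N) i j = mget A i j)
  (c11 c12 c21 c22A c22LU : nat -> R)
  (Hc : forall k, [/\ 0 <= c11 k, 0 <= c12 k, 0 <= c21 k, 0 <= c22A k & 0 <= c22LU k])
  (H11 : forall k, (k < nt)%N ->
     nrm _ _ (blk I (I k) (Ak k) k k.+1 k k.+1
              - blk I 0 L k k.+1 k k.+1 *m blk I 0 Rh k k.+1 k k.+1)
     <= c11 k * u * nrm _ _ (blk I (I k) (Ak k) k k.+1 k k.+1))
  (H12 : forall k, (k.+1 < nt)%N ->
     nrm _ _ (blk I (I k) (Ak k) k k.+1 k.+1 nt
              - blk I 0 L k k.+1 k k.+1 *m blk I 0 Rh k k.+1 k.+1 nt)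
     <= c12 k * u * nrm _ _ (blk I 0 L k k.+1 k k.+1)
                  * nrm _ _ (blk I 0 Rh k k.+1 k.+1 nt))
  (H21 : forall k, (k.+1 < nt)%N ->
     nrm _ _ (blk I (I k) (Ak k) k.+1 nt k k.+1
              - blk I 0 L k.+1 nt k k.+1 *m blk I 0 Rh k k.+1 k k.+1)
     <= c21 k * u * nrm _ _ (blk I 0 L k.+1 nt k k.+1)
                  * nrm _ _ (blk I 0 Rh k k.+1 k k.+1))
  (H22 : forall k, (k.+1 < nt)%N ->
     nrm _ _ (Ak k.+1
              - (blk I (I k) (Ak k) k.+1 nt k.+1 nt
                 - blk I 0 L k.+1 nt k k.+1 *m blk I 0 Rh k k.+1 k.+1 nt))
     <= c22A k * u * nrm _ _ (blk I (I k) (Ak k) k.+1 nt k.+1 nt)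
        + c22LU k * u * nrm _ _ (blk I 0 L k.+1 nt k k.+1)
                      * nrm _ _ (blk I 0 Rh k k.+1 k.+1 nt)) :
  let rho := \big[Num.max/0]_(k < nt) (nrm _ _ (Ak k) / nrm _ _ A) in
  let CA := \sum_(k < nt) c11 k + \sum_(k < nt.-1) c22A k in
  let CLU := \sum_(k < nt.-1) (c21 k + c12 k + c22LU k) in
  nrm _ _ (A - L *m Rh) <= CA * u * rho * nrm _ _ A + CLU * u * nrm _ _ L * nrm _ _ Rh.
Proof.
cbv zeta; set rho := \big[Num.max/0]_(k < nt) _.
have nA_gt0 : 0 < nrm _ _ A := nrm_gt0 Hnrm HA0.
have Ak_le k : (k < nt)%N -> nrm _ _ (Ak k) <= rho * nrm _ _ A.
  move=> lt_k; rewrite -ler_pdivrMr //.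
  exact: (le_bigmax 0 (fun k : 'I_nt => nrm _ _ (Ak k) / nrm _ _ A) (Ordinal lt_k)).
rewrite (lu_residual0 nrm HI0 HInt L Rh HA1) -mulrA.
exact (lu_residual0_le Hnrm HI0 HInt HIinc HL HR Hu Hc Ak_le H11 H12 H21 H22 Hnt).
Qed.
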